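(* Let $a\in\mathcal A_2$ with $|a|=1$, $a\ne\pm1$, be written as $a=\cos\theta+v\,e_1e_2\sin\theta=\exp(\theta\,v\,e_1e_2)$ with $\theta\in(0,\pi)$, $v\in\mathcal A_2^{(0,1)}$, $|v|=1$. Let $\rho_a:\mathcal A_2^{(0,1)}\to\mathcal A_2^{(0,1)}$, $\rho_a(x)=a\,x\,(a')^{-1}$. Then $\rho_a\in\mathrm{SO}(3)$, $v$ is an eigenvector of $\rho_a$ with eigenvalue $1$, and $\rho_a$ is the rotation of angle $2\theta$ about $v$, i.e. its restriction to the orthogonal complement $v^\perp$ is the rotation by angle $2\theta$ with respect to the orientation of $v^\perp$ induced by $v$.
   Context: $\mathcal A_2$ is the real associative algebra generated by $e_1,e_2$ with $e_1^2=e_2^2=-1$, $e_1e_2=-e_2e_1$, with Euclidean norm in the basis $1,e_1,e_2,e_1e_2$. The main involution is $(a_0+a_1e_1+a_2e_2+a_{12}e_1e_2)'=a_0-a_1e_1-a_2e_2+a_{12}e_1e_2$. $\mathcal A_2^{(0,1)}=\mathbb R+\mathbb Re_1+\mathbb Re_2$ is regarded as Euclidean 3-space oriented by the ordered basis $(1,e_1,e_2)$; for a unit vector $v$, the plane $v^\perp$ is oriented so that a basis $(w_1,w_2)$ of $v^\perp$ is positive iff $(v,w_1,w_2)$ is a positive basis of $\mathcal A_2^{(0,1)}$. *)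

From HB Require Import structures.
From mathcomp Require Import all_boot all_order all_algebra.
From mathcomp Require Import reals trigo.
Set Implicit Arguments. Unset Strict Implicit. Unset Printing Implicit Defensive.
Import Order.TTheory GRing.Theory Num.Theory.
Local Open Scope ring_scope.

(* The algebra A_2: elements a0 + a1 e1 + a2 e2 + a12 e1e2. *)
Record A2 (R : realType) := mkA2 { c0 : R; c1 : R; c2 : R; c12 : R }.

Section A2ops.
Variable R : realType.
Implicit Types x y : A2 R.

Definition A2add x y := mkA2 (c0 x + c0 y) (c1 x + c1 y) (c2 x + c2 y) (c12 x + c12 y).
Definition A2scale (k : R) x := mkA2 (k * c0 x) (k * c1 x) (k * c2 x) (k * c12 x).
Definition A2real (k : R) : A2 R := mkA2 k 0 0 0.
Definition A2one : A2 R := A2real 1.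
Definition e1 : A2 R := mkA2 0 1 0 0.
Definition e2 : A2 R := mkA2 0 0 1 0.

(* Multiplication determined by e1^2 = e2^2 = -1, e1 e2 = - e2 e1,
   extended bilinearly (basis products: e1 e12 = -e2, e12 e1 = e2,
   e2 e12 = e1, e12 e2 = -e1, e12 e12 = -1). *)
Definition A2mul x y :=
  mkA2 (c0 x * c0 y - c1 x * c1 y - c2 x * c2 y - c12 x * c12 y)
       (c0 x * c1 y + c1 x * c0 y + c2 x * c12 y - c12 x * c2 y)
       (c0 x * c2 y + c2 x * c0 y - c1 x * c12 y + c12 x * c1 y)
       (c0 x * c12 y + c12 x * c0 y + c1 x * c2 y - c2 x * c1 y).

Definition e12 : A2 R := A2mul e1 e2.

Definition A2norm x := Num.sqrt (c0 x ^+ 2 + c1 x ^+ 2 + c2 x ^+ 2 + c12 x ^+ 2).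

Definition invol x := mkA2 (c0 x) (- c1 x) (- c2 x) (c12 x).

Definition A2inv x :=
  A2scale (A2norm x ^+ 2)^-1 (mkA2 (c0 x) (- c1 x) (- c2 x) (- c12 x)).

(* A_2^{(0,1)} = R + R e1 + R e2, coordinates w.r.t. the ordered basis (1,e1,e2) *)
Definition A2vec (x : 'rV[R]_3) : A2 R := mkA2 (x 0 0) (x 0 1) (x 0 2%:R) 0.

Definition dot3 (x y : 'rV[R]_3) : R := \sum_(i < 3) x 0 i * y 0 i.

Definition mat3 (u v w : 'rV[R]_3) : 'M[R]_3 :=
  \matrix_(i < 3, j < 3)
    (if (i : nat) == 0%N then u 0 j else if (i : nat) == 1%N then v 0 j else w 0 j).

Definition positive_basis (u v w : 'rV[R]_3) : Prop := 0 < \det (mat3 u v w).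

Definition A2rho (a x : A2 R) : A2 R := A2mul (A2mul a x) (A2inv (invol a)).

End A2ops.

From HB Require Import structures.
From mathcomp Require Import all_boot all_order all_algebra.
From mathcomp Require Import reals trigo ring lra.
Import Order.TTheory GRing.Theory Num.Theory.
Local Open Scope ring_scope.
Set Implicit Arguments. Unset Strict Implicit. Unset Printing Implicit Defensive.

(* With |v| = 1, the rotor a = cos t + sin t (v e12) has |a'| = 1, so (a')^-1 is just a
   conjugate and rho_a is a polynomial map.  Expanding it on x in A_2^(0,1) gives
   Rodrigues' formula  x |-> C x + S (v × x) + (1 - C) (v.x) v  with C = cos 2t and
   S = sin 2t.  Since C^2 + S^2 = 1 and |v| = 1, this map preserves dot and cross
   products, so its matrix lies in SO(3); it fixes v and acts on v^perp by
   w |-> C w + S (v × w).  Finally, for a positive orthonormal basis (v, w1, w2) the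
   Gram determinant forces det (v, w1, w2) = 1, whence w2 = v × w1 and v × w2 = - w1. *)

Lemma sum3 (V : nmodType) (F : 'I_3 -> V) : \sum_(i < 3) F i = F 0 + F 1 + F 2%:R.
Proof.
by rewrite !big_ord_recl big_ord0 addr0 addrA; congr (_ + _ + _); congr F; apply: val_inj.
Qed.

Lemma row3P (T : Type) (x y : 'rV[T]_3) :
  x 0 0 = y 0 0 -> x 0 1 = y 0 1 -> x 0 2%:R = y 0 2%:R -> x = y.
Proof.
move=> h0 h1 h2; apply/rowP => -[[|[|[|//]]] i] /=.
- by rewrite (_ : Ordinal i = 0) //; apply: val_inj.
- by rewrite (_ : Ordinal i = 1) //; apply: val_inj.
- by rewrite (_ : Ordinal i = 2%:R) //; apply: val_inj.
Qed.

Definition row3 (V : nmodType) (a b c : V) : 'rV[V]_3 := \row_j [:: a; b; c]`_j.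

Lemma row3E (V : nmodType) (x : 'rV[V]_3) : x = row3 (x 0 0) (x 0 1) (x 0 2%:R).
Proof. by apply: row3P; rewrite !mxE. Qed.

Section Vec3.
Variable R : realType.
Implicit Types u x y z : 'rV[R]_3.

Definition cross x y : 'rV[R]_3 :=
  row3 (x 0 1 * y 0 2%:R - x 0 2%:R * y 0 1)
       (x 0 2%:R * y 0 0 - x 0 0 * y 0 2%:R)
       (x 0 0 * y 0 1 - x 0 1 * y 0 0).

Lemma dot3C x y : dot3 x y = dot3 y x.
Proof. by apply: eq_bigr => i _; rewrite mulrC. Qed.

Lemma dot3_ge0 x : 0 <= dot3 x x.
Proof. by apply: sumr_ge0 => i _; rewrite -expr2 sqr_ge0. Qed.

Lemma dot3_eq0 x : dot3 x x = 0 -> x = 0.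
Proof.
rewrite /dot3 sum3 -!expr2 => /eqP.
rewrite paddr_eq0 ?addr_ge0 ?sqr_ge0 // paddr_eq0 ?sqr_ge0 //.
rewrite !sqrf_eq0 => /andP [/andP [/eqP h0 /eqP h1] /eqP h2].
by apply: row3P; rewrite mxE.
Qed.

Lemma dot3_subr x y : dot3 (x - y) (x - y) = dot3 x x + dot3 y y - 2 * dot3 x y.
Proof. by rewrite /dot3 !sum3 !mxE; ring. Qed.

Lemma cross_self x : cross x x = 0.
Proof. by apply: row3P; rewrite !mxE /=; ring. Qed.

Lemma dot3_cross x y : dot3 x (cross x y) = 0.
Proof. by rewrite /dot3 sum3 !mxE /=; ring. Qed.

Lemma cross_cross x y : cross x (cross x y) = dot3 x y *: x - dot3 x x *: y.
Proof. by apply: row3P; rewrite /dot3 !sum3 !mxE /=; ring. Qed.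

Lemma dot3_cross_cross x y :
  dot3 (cross x y) (cross x y) = dot3 x x * dot3 y y - dot3 x y ^+ 2.
Proof. by rewrite /dot3 !sum3 !mxE /=; ring. Qed.

Lemma det_mat3 x y z : \det (mat3 x y z) = dot3 z (cross x y).
Proof.
rewrite [in LHS](row3E x) [in LHS](row3E y) [in LHS](row3E z).
rewrite (expand_det_row _ 0) !big_ord_recl big_ord0 /cofactor.
rewrite !(expand_det_row _ 0) !big_ord_recl !big_ord0 /cofactor.
rewrite !(expand_det_row _ 0) !big_ord_recl !big_ord0 /cofactor.
by rewrite !det_mx00 /dot3 sum3 !mxE /=; ring.
Qed.

Lemma det_mat3_sqr x y z : \det (mat3 x y z) ^+ 2 =
  dot3 x x * (dot3 y y * dot3 z z - dot3 y z ^+ 2)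
  - dot3 x y * (dot3 x y * dot3 z z - dot3 y z * dot3 x z)
  + dot3 x z * (dot3 x y * dot3 y z - dot3 y y * dot3 x z).
Proof. by rewrite det_mat3 /dot3 !sum3 !mxE /=; ring. Qed.

Lemma mat3_orthonormal x y z :
  dot3 x x = 1 -> dot3 y y = 1 -> dot3 z z = 1 ->
  dot3 x y = 0 -> dot3 x z = 0 -> dot3 y z = 0 ->
  mat3 x y z *m (mat3 x y z)^T = 1%:M.
Proof.
move=> xx yy zz xy xz yz.
apply/matrixP => -[[|[|[|//]]] i] [[|[|[|//]]] j]; rewrite !mxE /=.
all: under eq_bigr do rewrite !mxE /=.
all: by rewrite -/(dot3 _ _) ?(dot3C y x) ?(dot3C z x) ?(dot3C z y).
Qed.

Lemma positive_orthonormal_cross u w1 w2 :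
  dot3 u u = 1 -> dot3 w1 w1 = 1 -> dot3 w2 w2 = 1 ->
  dot3 u w1 = 0 -> dot3 u w2 = 0 -> dot3 w1 w2 = 0 ->
  positive_basis u w1 w2 -> w2 = cross u w1.
Proof.
move=> uu w11 w22 uw1 uw2 w12 pos.
have det1 : \det (mat3 u w1 w2) = 1.
  have := det_mat3_sqr u w1 w2; rewrite uu w11 w22 uw1 uw2 w12 => sq.
  by move: pos; rewrite /positive_basis; nra.
apply/eqP; rewrite -subr_eq0; apply/eqP/dot3_eq0.
by rewrite dot3_subr dot3_cross_cross -det_mat3 det1 uu w11 w22 uw1; ring.
Qed.

End Vec3.

Section Rodrigues.
Variables (R : realType) (C S : R) (v : 'rV[R]_3).
Implicit Types w x y : 'rV[R]_3.

Definition rodrigues x : 'rV[R]_3 :=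
  C *: x + S *: cross v x + ((1 - C) * dot3 v x) *: v.

Definition rodrigues_mx : 'M[R]_3 :=
  mat3 (rodrigues (row3 1 0 0)) (rodrigues (row3 0 1 0)) (rodrigues (row3 0 0 1)).

Lemma mul_rodrigues_mx x : x *m rodrigues_mx = rodrigues x.
Proof. by apply: row3P; rewrite !mxE sum3 !mxE /= /dot3 !sum3 !mxE /=; ring. Qed.

Lemma rodrigues_perp w : dot3 v w = 0 -> rodrigues w = C *: w + S *: cross v w.
Proof. by move=> vw; rewrite /rodrigues vw mulr0 scale0r addr0. Qed.

Hypotheses (unit_CS : C ^+ 2 + S ^+ 2 = 1) (unit_v : dot3 v v = 1).

Lemma rodrigues_axis : rodrigues v = v.
Proof.
by rewrite /rodrigues cross_self scaler0 addr0 unit_v mulr1 -scalerDl subrKC scale1r.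
Qed.

Lemma rodrigues_cross w :
  dot3 v w = 0 -> rodrigues (cross v w) = C *: cross v w - S *: w.
Proof.
move=> vw; rewrite rodrigues_perp ?dot3_cross // cross_cross vw unit_v.
by rewrite scale0r scale1r sub0r scalerN.
Qed.

Lemma dot3_rodrigues x y : dot3 (rodrigues x) (rodrigues y) = dot3 x y.
Proof.
move: unit_CS unit_v; rewrite /rodrigues /dot3 !sum3 !mxE /=.
move: (v 0 0) (v 0 1) (v 0 2%:R) (x 0 0) (x 0 1) (x 0 2%:R) (y 0 0) (y 0 1) (y 0 2%:R).
move=> v0 v1 v2 x0 x1 x2 y0 y1 y2 CS vv.
have eC : C ^+ 2 = 1 - S ^+ 2 by rewrite -CS addrK.
have ev : v0 ^+ 2 = 1 - v1 ^+ 2 - v2 ^+ 2 by rewrite -vv; ring.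
by ring: eC ev.
Qed.

Lemma cross_rodrigues x y : cross (rodrigues x) (rodrigues y) = rodrigues (cross x y).
Proof.
move: unit_CS unit_v; rewrite /dot3 sum3 => CS vv.
have eC : C ^+ 2 = 1 - S ^+ 2 by rewrite -CS addrK.
have ev : v 0 0 ^+ 2 = 1 - v 0 1 ^+ 2 - v 0 2%:R ^+ 2 by rewrite -vv; ring.
by apply: row3P; rewrite /rodrigues /dot3 !sum3 !mxE /=; ring: eC ev.
Qed.

Lemma rodrigues_mx_orthogonal : rodrigues_mx *m rodrigues_mx^T = 1%:M.
Proof.
by apply: mat3_orthonormal; rewrite dot3_rodrigues /dot3 sum3 !mxE /=; ring.
Qed.

Lemma det_rodrigues_mx : \det rodrigues_mx = 1.
Proof.
have e1e2 : cross (row3 1 0 0) (row3 0 1 0) = row3 0 0 1 :> 'rV[R]_3.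
  by apply: row3P; rewrite !mxE /=; ring.
by rewrite det_mat3 cross_rodrigues e1e2 dot3_rodrigues /dot3 sum3 !mxE /=; ring.
Qed.

End Rodrigues.

Section Rotor.
Variable R : realType.

Definition A2rotor (c s : R) (v : 'rV[R]_3) : A2 R :=
  A2add (A2real c) (A2scale s (A2mul (A2vec v) (e12 R))).

Lemma A2norm_vec (x : 'rV[R]_3) : A2norm (A2vec x) = Num.sqrt (dot3 x x).
Proof. by rewrite /A2norm /dot3 sum3 /=; congr Num.sqrt; ring. Qed.

Lemma A2norm_invol (x : A2 R) : A2norm (invol x) = A2norm x.
Proof. by rewrite /A2norm /=; congr Num.sqrt; ring. Qed.

Lemma A2inv_norm1 (x : A2 R) :
  A2norm x = 1 -> A2inv x = mkA2 (c0 x) (- c1 x) (- c2 x) (- c12 x).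
Proof. by move=> nx; rewrite /A2inv nx expr1n invr1 /A2scale !mul1r. Qed.

Lemma A2rotorE c s v :
  A2rotor c s v = mkA2 c (s * v 0 2%:R) (- (s * v 0 1)) (s * v 0 0).
Proof. by rewrite /A2rotor /A2add /A2scale /A2real /e12 /A2mul /=; congr mkA2; ring. Qed.

Variables (c s : R) (v : 'rV[R]_3).
Hypotheses (unit_cs : c ^+ 2 + s ^+ 2 = 1) (unit_v : dot3 v v = 1).

Lemma A2norm_rotor : A2norm (A2rotor c s v) = 1.
Proof.
rewrite /A2norm -sqrtr1; congr Num.sqrt.
by rewrite -unit_cs -[s ^+ 2]mulr1 -unit_v /dot3 sum3 /=; ring.
Qed.

Lemma A2rho_rotor x :
  A2rho (A2rotor c s v) (A2vec x) =
  A2vec (rodrigues (c ^+ 2 - s ^+ 2) (c * s *+ 2) v x).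
Proof.
have eD : 1 - (c ^+ 2 - s ^+ 2) = s ^+ 2 *+ 2 by rewrite -unit_cs; ring.
move: unit_v; rewrite /A2rho A2inv_norm1 ?A2norm_invol ?A2norm_rotor // A2rotorE.
rewrite /rodrigues eD /A2vec /A2mul /dot3 !sum3 !mxE /=.
move: (v 0 0) (v 0 1) (v 0 2%:R) (x 0 0) (x 0 1) (x 0 2%:R) => v0 v1 v2 x0 x1 x2 vv.
have ev : v0 ^+ 2 = 1 - v1 ^+ 2 - v2 ^+ 2 by rewrite -vv; ring.
by congr mkA2; ring: ev.
Qed.

End Rotor.

Theorem proposition4p3 (R : realType) (a : A2 R) (theta : R) (v : 'rV[R]_3) :
  A2norm a = 1 -> a <> A2one R -> a <> A2scale (-1) (A2one R) ->
  0 < theta < pi -> A2norm (A2vec v) = 1 ->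
  a = A2add (A2real (cos theta)) (A2scale (sin theta) (A2mul (A2vec v) (e12 R))) ->
  (exists M : 'M[R]_3,
      M *m M^T = 1%:M /\ \det M = 1 /\
      forall x : 'rV[R]_3, A2rho a (A2vec x) = A2vec (x *m M)) /\
  A2rho a (A2vec v) = A2vec v /\
  (forall w1 w2 : 'rV[R]_3,
      dot3 v w1 = 0 -> dot3 v w2 = 0 ->
      dot3 w1 w1 = 1 -> dot3 w2 w2 = 1 -> dot3 w1 w2 = 0 ->
      positive_basis v w1 w2 ->
      A2rho a (A2vec w1) = A2vec (cos (2 * theta) *: w1 + sin (2 * theta) *: w2) /\
      A2rho a (A2vec w2) = A2vec ((- sin (2 * theta)) *: w1 + cos (2 * theta) *: w2)).
Proof.
(* |a| = 1 follows from the shape of a, and a <> 1, -1 and 0 < theta < pi only make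
   theta and v unique; none of them is needed. *)
move=> _ _ _ _ nv ->.
have vv : dot3 v v = 1 by rewrite -(sqr_sqrtr (dot3_ge0 v)) -A2norm_vec nv expr1n.
have cos2 : cos (2 * theta) = cos theta ^+ 2 - sin theta ^+ 2.
  by rewrite mulr_natl cos_mulr2n -(cos2Dsin2 theta); ring.
have sin2 : sin (2 * theta) = cos theta * sin theta *+ 2 by rewrite mulr_natl sin_mulr2n.
have rho x : A2rho (A2rotor (cos theta) (sin theta) v) (A2vec x) =
             A2vec (rodrigues (cos (2 * theta)) (sin (2 * theta)) v x).
  by rewrite A2rho_rotor ?cos2Dsin2 // cos2 sin2.
have CS := cos2Dsin2 (2 * theta).
split.
  exists (rodrigues_mx (cos (2 * theta)) (sin (2 * theta)) v).
  split; first exact: rodrigues_mx_orthogonal CS vv.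
  split; first exact: det_rodrigues_mx CS vv.
  by move=> x; rewrite rho mul_rodrigues_mx.
split; first by rewrite rho rodrigues_axis.
move=> w1 w2 vw1 vw2 w11 w22 w12 pos.
have w2E := positive_orthonormal_cross vv w11 w22 vw1 vw2 w12 pos.
split; first by rewrite rho rodrigues_perp // -w2E.
by rewrite rho w2E rodrigues_cross // -w2E scaleNr addrC.
Qed.
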